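(* (1) If two triangles $I_1,I_2$ intersect, then there is a triangle $I$ with $\mathrm{span}(I)=\mathrm{span}(I_1)+\mathrm{span}(I_2)$ containing $I_1\cup I_2$. (2) If $A_1,A_2\subseteq\mathbb{Z}^2$ are such that some point of $A_1$ is a neighbor in $\mathbf{G}$ of some point of $A_2$, and $A_j\subseteq D(I_j,1/3)$ for triangles $I_j$ ($j=1,2$), then there is a triangle $I$ with $\mathrm{span}(I)=\mathrm{span}(I_1)+\mathrm{span}(I_2)$ such that $A_1\cup A_2\subseteq D(I,1/3)$.
   Context: For real numbers $a,b,c$, the triangle $L(a,b,c)$ is $\{(x,y)\in\mathbb{R}^2 : -x\le a,\ -y\le b,\ x+y\le c\}$; its span is $\mathrm{span}(L(a,b,c))=a+b+c$. The deflation of $I=L(a,b,c)$ by $d$ is $D(I,d)=L(a-d,b-d,c-d)$. The graph $\mathbf{G}$ on $\mathbb{Z}^2$ joins each point $p$ to $p\pm(1,0)$, $p\pm(0,1)$, $p+(-1,1)$, $p+(1,-1)$. *)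

From Stdlib Require Import Reals ZArith.
Open Scope R_scope.

Record tri := Tri { ta : R; tb : R; tc : R }.

Definition inL (I : tri) (p : R * R) : Prop :=
  - fst p <= ta I /\ - snd p <= tb I /\ fst p + snd p <= tc I.

Definition span (I : tri) : R := ta I + tb I + tc I.

Definition deflate (I : tri) (d : R) : tri :=
  Tri (ta I - d) (tb I - d) (tc I - d).

Definition toR2 (p : Z * Z) : R * R := (IZR (fst p), IZR (snd p)).

Definition Gadj (p q : Z * Z) : Prop :=
  let dx := (fst q - fst p)%Z in let dy := (snd q - snd p)%Z in
  (dx = 1 /\ dy = 0)%Z \/ (dx = -1 /\ dy = 0)%Z \/
  (dx = 0 /\ dy = 1)%Z \/ (dx = 0 /\ dy = -1)%Z \/
  (dx = -1 /\ dy = 1)%Z \/ (dx = 1 /\ dy = -1)%Z.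

From Stdlib Require Import Reals ZArith Lra Lia.
Open Scope R_scope.

(* The Minkowski sum I1 + I2 of two triangles is a triangle of span
   span I1 + span I2, and translating it by -p for a common point p of I1 and
   I2 yields a triangle containing both.  For (2) it therefore suffices to find
   a common point of I1 and I2: if p ~ q in G, the componentwise maximum m of p
   and q has coordinate sum at most one more than that of p and of q, and the
   two 1/3-margins of the deflations absorb this excess, so m - (1/3, 1/3) lies
   in I1 and in I2.  Deflation commutes with the translated sum, so the same
   triangle also works for the deflated sets. *)

Definition tri_merge (I1 I2 : tri) (p : R * R) : tri :=
  Tri (ta I1 + ta I2 + fst p) (tb I1 + tb I2 + snd p)
      (tc I1 + tc I2 - fst p - snd p).

Lemma span_tri_merge (I1 I2 : tri) (p : R * R) :
  span (tri_merge I1 I2 p) = span I1 + span I2.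
Proof. unfold span, tri_merge; simpl; ring. Qed.

Lemma inL_tri_mergel (I1 I2 : tri) (p q : R * R) :
  inL I2 p -> inL I1 q -> inL (tri_merge I1 I2 p) q.
Proof. unfold inL, tri_merge; simpl; lra. Qed.

Lemma inL_tri_merger (I1 I2 : tri) (p q : R * R) :
  inL I1 p -> inL I2 q -> inL (tri_merge I1 I2 p) q.
Proof. unfold inL, tri_merge; simpl; lra. Qed.

Lemma deflate_tri_mergel (I1 I2 : tri) (p : R * R) (d : R) :
  deflate (tri_merge I1 I2 p) d = tri_merge (deflate I1 d) I2 p.
Proof. unfold deflate, tri_merge; simpl; f_equal; ring. Qed.

Lemma deflate_tri_merger (I1 I2 : tri) (p : R * R) (d : R) :
  deflate (tri_merge I1 I2 p) d = tri_merge I1 (deflate I2 d) p.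
Proof. unfold deflate, tri_merge; simpl; f_equal; ring. Qed.

Lemma inL_deflate_tri_merge (I1 I2 : tri) (p : R * R) (d : R) (q : R * R) :
  inL I1 p -> inL I2 p ->
  inL (deflate I1 d) q \/ inL (deflate I2 d) q ->
  inL (deflate (tri_merge I1 I2 p) d) q.
Proof.
  intros H1 H2 [Hq | Hq].
  - rewrite deflate_tri_mergel; exact (inL_tri_mergel _ _ _ _ H2 Hq).
  - rewrite deflate_tri_merger; exact (inL_tri_merger _ _ _ _ H1 Hq).
Qed.

Definition zjoin (p q : Z * Z) : Z * Z :=
  (Z.max (fst p) (fst q), Z.max (snd p) (snd q)).

Lemma Gadj_zjoin_sum (p q : Z * Z) :
  Gadj p q ->
  (fst (zjoin p q) + snd (zjoin p q) <= fst p + snd p + 1)%Z /\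
  (fst (zjoin p q) + snd (zjoin p q) <= fst q + snd q + 1)%Z.
Proof. unfold Gadj, zjoin; simpl; lia. Qed.

Lemma inL_deflate_third_shift (I : tri) (p m : Z * Z) :
  inL (deflate I (1/3)) (toR2 p) ->
  (fst p <= fst m)%Z -> (snd p <= snd m)%Z ->
  (fst m + snd m <= fst p + snd p + 1)%Z ->
  inL I (IZR (fst m) - 1/3, IZR (snd m) - 1/3).
Proof.
  unfold inL, deflate, toR2; simpl.
  intros Hp Hx Hy Hs.
  apply IZR_le in Hx, Hy, Hs.
  rewrite !plus_IZR in Hs.
  lra.
Qed.

Lemma Gadj_deflate_third_meet (I1 I2 : tri) (p q : Z * Z) :
  Gadj p q ->
  inL (deflate I1 (1/3)) (toR2 p) -> inL (deflate I2 (1/3)) (toR2 q) ->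
  exists r, inL I1 r /\ inL I2 r.
Proof.
  intros Hpq Hp Hq.
  destruct (Gadj_zjoin_sum p q Hpq) as [Hsp Hsq].
  exists (IZR (fst (zjoin p q)) - 1/3, IZR (snd (zjoin p q)) - 1/3).
  split; [apply inL_deflate_third_shift with (1 := Hp)
        | apply inL_deflate_third_shift with (1 := Hq)];
    unfold zjoin in *; simpl in *; lia.
Qed.

Theorem lemma2p2 :
  (forall I1 I2 : tri,
     (exists p, inL I1 p /\ inL I2 p) ->
     exists I : tri, span I = span I1 + span I2 /\
       (forall p, inL I1 p \/ inL I2 p -> inL I p)) /\
  (forall (A1 A2 : Z * Z -> Prop) (I1 I2 : tri),
     (exists p q, A1 p /\ A2 q /\ Gadj p q) ->
     (forall p, A1 p -> inL (deflate I1 (1/3)) (toR2 p)) ->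
     (forall p, A2 p -> inL (deflate I2 (1/3)) (toR2 p)) ->
     exists I : tri, span I = span I1 + span I2 /\
       (forall p, A1 p \/ A2 p -> inL (deflate I (1/3)) (toR2 p))).
Proof.
  split.
  - intros I1 I2 [r [H1 H2]].
    exists (tri_merge I1 I2 r); split; [apply span_tri_merge|].
    intros q [Hq | Hq]; [apply inL_tri_mergel | apply inL_tri_merger]; assumption.
  - intros A1 A2 I1 I2 [p [q [Ap [Aq Hpq]]]] HA1 HA2.
    destruct (Gadj_deflate_third_meet I1 I2 p q Hpq (HA1 p Ap) (HA2 q Aq))
      as [r [H1 H2]].
    exists (tri_merge I1 I2 r); split; [apply span_tri_merge|].
    intros s [Hs | Hs]; apply inL_deflate_tri_merge; auto.
Qed.
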